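(* Let $\mathcal{F}=\{f_i\}_{i=1}^N$ be a frame for $\mathbb{R}^n$. If $\mathcal{F}$ has the exact PR-redundancy property, then the matrices $\{f_if_i^{T}\}_{i=1}^N$ are linearly independent in the space of real symmetric $n\times n$ matrices (and hence $N\le n(n+1)/2$). The converse does not hold in general: there exist $n$ and a frame $\mathcal{F}=\{f_i\}_{i=1}^N$ for $\mathbb{R}^n$ with $\{f_if_i^T\}_{i=1}^N$ linearly independent which does not have the exact PR-redundancy property.
   Context: A frame for $\mathbb{R}^n$ is a finite spanning sequence. Let $\mathcal{S}_2$ be the set of real symmetric $n\times n$ matrices of rank at most $2$. For $\Lambda\subseteq\{1,\dots,N\}$ let $\mathcal{F}_\Lambda=\{f_i\}_{i\in\Lambda}$ and $\Theta_{L(\mathcal{F}_\Lambda)}(A)=(f_i^TAf_i)_{i\in\Lambda}$ for symmetric $A$. $\mathcal{F}$ has the exact PR-redundancy property if for every proper subset $\Lambda\subsetneq\{1,\dots,N\}$, $\ker(\Theta_{L(\mathcal{F}_\Lambda)})\cap\mathcal{S}_2\neq\ker(\Theta_{L(\mathcal{F})})\cap\mathcal{S}_2$. *)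

From HB Require Import structures.
From mathcomp Require Import all_boot all_order all_algebra.
From mathcomp Require Import reals.
Set Implicit Arguments. Unset Strict Implicit. Unset Printing Implicit Defensive.
Import Order.TTheory GRing.Theory Num.Theory.
Local Open Scope ring_scope.

Definition is_frame (R : realType) (n N : nat) (f : 'I_N -> 'cV[R]_n) : Prop :=
  forall v : 'cV[R]_n, exists c : 'I_N -> R, v = \sum_(i < N) c i *: f i.

Definition S2 (R : realType) (n : nat) (A : 'M[R]_n) : Prop :=
  A^T = A /\ (\rank A <= 2)%N.

(* ker(Theta_{L(F_Lambda)}) \cap S_2, as a predicate on n x n matrices:
   symmetric A of rank <= 2 with f_i^T A f_i = 0 for all i in Lambda. *)
Definition kerS2 (R : realType) (n N : nat) (f : 'I_N -> 'cV[R]_n)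
  (Lam : {set 'I_N}) : 'M[R]_n -> Prop :=
  fun A => S2 A /\ forall i, i \in Lam -> ((f i)^T *m A *m f i) 0 0 = 0.

Definition exact_PR_redundancy (R : realType) (n N : nat)
  (f : 'I_N -> 'cV[R]_n) : Prop :=
  forall Lam : {set 'I_N}, Lam \proper [set: 'I_N] ->
    kerS2 f Lam <> kerS2 f [set: 'I_N].

Definition outer_lin_indep (R : realType) (n N : nat)
  (f : 'I_N -> 'cV[R]_n) : Prop :=
  forall c : 'I_N -> R,
    \sum_(i < N) c i *: (f i *m (f i)^T) = 0 -> forall i, c i = 0.

From HB Require Import structures.
From mathcomp Require Import all_boot all_order all_algebra.
From mathcomp Require Import reals boolp lra.
Import Order.TTheory GRing.Theory Num.Theory.
Set Implicit Arguments. Unset Strict Implicit. Unset Printing Implicit Defensive.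
Local Open Scope ring_scope.

(* Since f^T A f = tr (A (f f^T)), a linear relation sum_i c_i f_i f_i^T = 0
   with c_j <> 0 makes the constraint f_j^T A f_j = 0 a consequence of the
   others, for every A; so f_j can be dropped without changing the kernel, and
   exact PR-redundancy forces the outer products to be independent. They lie in
   the n(n+1)/2-dimensional space of symmetric matrices, whence the bound.
   For the converse, the six vectors e1, e2, e3, (1,1,1), (1,1,-1), (1,4,2) of
   R^3 have independent outer products, but e3 is redundant on S_2: a symmetric
   A annihilated by the other five quadratic forms is a multiple of
   [[0,1,0],[1,0,0],[0,0,-2]], which has rank 3 unless A = 0. *)

Lemma qform_trace (R : comPzRingType) n (x : 'cV[R]_n) (A : 'M_n) :
  (x^T *m A *m x) 0 0 = \tr (A *m (x *m x^T)).
Proof.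
by rewrite -trace_mx11 [in RHS]mulmxA [in RHS]mxtrace_mulC [in RHS]mulmxA.
Qed.

Lemma qform_outer_dep_eq0 (R : comPzRingType) n N (f : 'I_N -> 'cV[R]_n)
    (c : 'I_N -> R) (A : 'M_n) :
  \sum_i c i *: (f i *m (f i)^T) = 0 ->
  \sum_i c i * ((f i)^T *m A *m f i) 0 0 = 0.
Proof.
move=> dep; transitivity (\tr (A *m \sum_i c i *: (f i *m (f i)^T))).
  rewrite mulmx_sumr linear_sum; apply: eq_bigr => i _.
  by rewrite qform_trace -scalemxAr linearZ.
by rewrite dep mulmx0 linear0.
Qed.

Lemma implied_qform_not_exact_PR_redundancy (R : realType) n N
    (f : 'I_N -> 'cV[R]_n) j :
  (forall A, kerS2 f [set~ j] A -> ((f j)^T *m A *m f j) 0 0 = 0) ->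
  ~ exact_PR_redundancy f.
Proof.
move=> fj_redundant /(_ [set~ j]); apply.
  by rewrite properT; apply/eqP => /setP /(_ j); rewrite !inE eqxx.
apply/funext => A; apply/propext.
split=> -[A_S2 A_ker]; split=> // i _; last by rewrite A_ker ?inE.
case: (eqVneq i j) => [->|ij]; first exact: fj_redundant.
by apply: A_ker; rewrite !inE.
Qed.

Lemma exact_PR_redundancy_outer_lin_indep (R : realType) n N
    (f : 'I_N -> 'cV[R]_n) :
  exact_PR_redundancy f -> outer_lin_indep f.
Proof.
move=> f_PR c dep j; apply/eqP/negPn/negP => cj0.
apply: (implied_qform_not_exact_PR_redundancy (j := j) _ f_PR) => A [_ A_ker].
have := qform_outer_dep_eq0 A dep; rewrite (bigD1 j) //= big1 ?addr0.
  by move/eqP; rewrite mulf_eq0 (negPf cj0) => /eqP.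
by move=> i ij; rewrite A_ker ?mulr0 // !inE.
Qed.

Lemma sum_ord_leq (n b : nat) :
  (b < n)%N -> (\sum_(a < n) (a <= b : nat))%N = b.+1.
Proof.
move=> bn; rewrite -(big_mkord xpredT (fun a => (a <= b : nat))).
rewrite (@big_cat_nat _ _ _ b.+1) //= [X in (_ + X)%N]big1_seq ?addn0.
  rewrite (@eq_big_nat _ _ _ _ _ _ (fun=> 1%N)) ?sum_nat_const_nat ?muln1 //.
  by move=> a /andP[_]; rewrite ltnS => ->.
by move=> a /=; rewrite mem_index_iota => /andP[ba _]; rewrite leqNgt ba.
Qed.

Definition upper_idx n : {set 'I_n * 'I_n} :=
  [set p : 'I_n * 'I_n | (p.1 <= p.2)%N].

Lemma card_upper_idx n : #|upper_idx n| = 'C(n.+1, 2).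
Proof.
rewrite -sum1_card big_mkcond /=.
under eq_bigr => p _ do rewrite inE.
rewrite -(pair_bigA _ (fun a b : 'I_n => (a <= b : nat))) exchange_big /=.
rewrite (eq_bigr (fun b : 'I_n => b.+1)) => [|b _]; last exact: sum_ord_leq.
by rewrite -bin2_sum big_nat_recl //= big_mkord add0n.
Qed.

Definition upper_coords (R : pzRingType) n (A : 'M[R]_n) :
    'rV[R]_#|upper_idx n| :=
  \row_k A (enum_val k).1 (enum_val k).2.

Lemma sym_upper_coords_eq0 (R : pzRingType) n (A : 'M[R]_n) :
  A^T = A -> upper_coords A = 0 -> A = 0.
Proof.
move=> Asym A0; suff Aup p : p \in upper_idx n -> A p.1 p.2 = 0.
  apply/matrixP => a b; rewrite mxE; case: (leqP a b) => [ab|/ltnW ba].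
    by apply: (Aup (a, b)); rewrite inE.
  by rewrite -Asym mxE; apply: (Aup (b, a)); rewrite inE.
move=> pS; have /rowP/(_ (enum_rank_in pS p)) := A0.
by rewrite !mxE enum_rankK_in.
Qed.

Lemma outer_lin_indep_card (R : realType) n N (f : 'I_N -> 'cV[R]_n) :
  outer_lin_indep f -> (N <= 'C(n.+1, 2))%N.
Proof.
move=> f_indep; pose M := \matrix_i upper_coords (f i *m (f i)^T).
suff /eqP <- : row_free M by rewrite -card_upper_idx rank_leq_col.
apply: inj_row_free => v vM0.
pose B := \sum_i v 0 i *: (f i *m (f i)^T).
have Bsym : B^T = B.
  rewrite linear_sum; apply: eq_bigr => i _.
  by rewrite linearZ /= trmx_mul trmxK.
have B0 : B = 0.
  apply: sym_upper_coords_eq0 Bsym _; rewrite -vM0 mulmx_sum_row /upper_coords.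
  apply/rowP => k; rewrite !mxE !summxE; apply: eq_bigr => i _.
  by rewrite rowK !mxE.
by apply/rowP => i; rewrite mxE (f_indep _ B0).
Qed.

Lemma rank_lt_ker (F : fieldType) n (A : 'M[F]_n) :
  (\rank A < n)%N -> exists2 u : 'rV_n, u != 0 & u *m A = 0.
Proof.
move=> rankA; have /rowV0Pn[u /sub_kermxP uA u0] : kermx A != 0.
  by rewrite kermx_eq0 /row_free ltn_eqF.
by exists u.
Qed.

Lemma is_frame_of_basis (R : realType) n N (f : 'I_N -> 'cV[R]_n)
    (g : 'I_n -> 'I_N) :
  (forall i, f (g i) = delta_mx i 0) -> is_frame f.
Proof.
move=> fg v; exists (fun k => \sum_(i | g i == k) v i 0).
transitivity (\sum_i v i 0 *: f (g i)).
  by rewrite [LHS]matrix_sum_delta; apply: eq_bigr => i _; rewrite big_ord1 fg.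
rewrite (partition_big g xpredT) //=; apply: eq_bigr => k _.
by rewrite scaler_suml; apply: eq_bigr => i /eqP <-.
Qed.

Lemma outer_sum_entry (R : comPzRingType) n N (f : 'I_N -> 'cV[R]_n)
    (c : 'I_N -> R) a b :
  (\sum_k c k *: (f k *m (f k)^T)) a b = \sum_k c k * (f k a 0 * f k b 0).
Proof.
by rewrite summxE; apply: eq_bigr => k _; rewrite !mxE big_ord1 !mxE.
Qed.

Lemma qform_entries (R : comPzRingType) n (x : 'cV[R]_n) (A : 'M_n) :
  (x^T *m A *m x) 0 0 = \sum_a \sum_b x a 0 * A a b * x b 0.
Proof.
rewrite mxE [RHS]exchange_big; apply: eq_bigr => b _; rewrite mxE mulr_suml.
by apply: eq_bigr => a _; rewrite !mxE.
Qed.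

Definition ex_vec {R : pzRingType} (k : 'I_6) : 'cV[R]_3 :=
  \col_i nth 0 (nth [::] [:: [:: 1; 0; 0]; [:: 0; 1; 0]; [:: 0; 0; 1];
                             [:: 1; 1; 1]; [:: 1; 1; -1]; [:: 1; 4; 2]] k) i.

Section Example.

Variable R : realType.

Local Notation i0 := (@ord0 2).
Local Notation i1 := (lift i0 (@ord0 1)).
Local Notation i2 := (lift i0 (lift (@ord0 1) (@ord0 0))).
Local Notation e3 := (Ordinal (isT : (2 < 6)%N)).

Lemma ex_vec_frame : is_frame (@ex_vec R).
Proof.
apply: (@is_frame_of_basis _ _ _ _ (widen_ord (isT : (3 <= 6)%N))) => i.
apply/matrixP => a b; rewrite ord1 !mxE /=.
by case: i a => [[|[|[|//]]] ?] [[|[|[|//]]] ?].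
Qed.

Lemma ex_vec_outer_lin_indep : outer_lin_indep (@ex_vec R).
Proof.
move=> c dep.
have entry a b : \sum_k c k * (ex_vec k a 0 * ex_vec k b 0) = 0 :> R.
  by rewrite -outer_sum_entry dep mxE.
have := entry i0 i0; have := entry i1 i1; have := entry i2 i2.
have := entry i0 i1; have := entry i0 i2; have := entry i1 i2.
rewrite !big_ord_recl !big_ord0 !mxE /= => e12 e02 e01 e22 e11 e00 k.
do 6![case: (unliftP ord0 k) => [k' ->|->]; last lra; clear k;
      rename k' into k].
by case: k.
Qed.

Lemma ex_vec_qform_kernel (A : 'M[R]_3) :
  A^T = A ->
  (forall k, k != e3 -> ((ex_vec k)^T *m A *m ex_vec k) 0 0 = 0) ->
  [/\ A i0 i0 = 0, A i1 i1 = 0, A i0 i2 = 0, A i1 i2 = 0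
    & A i2 i2 = -2 * A i0 i1].
Proof.
move=> A_sym q.
have sym a b : A a b = A b a by rewrite -{1}A_sym mxE.
have := q ord0 isT; have := q (lift ord0 ord0) isT.
have := q (lift ord0 (lift ord0 (lift ord0 ord0))) isT.
have := q (lift ord0 (lift ord0 (lift ord0 (lift ord0 ord0)))) isT.
have := q (lift ord0 (lift ord0 (lift ord0 (lift ord0 (lift ord0 ord0))))) isT.
rewrite !qform_entries !big_ord_recl !big_ord0 !mxE /=.
rewrite [A i1 i0]sym [A i2 i0]sym [A i2 i1]sym => q5 q4 q3 q1 q0.
by split; lra.
Qed.

Lemma ex_vec_not_exact_PR_redundancy : ~ exact_PR_redundancy (@ex_vec R).
Proof.
apply: (implied_qform_not_exact_PR_redundancy (j := e3)).
move=> A [[A_sym A_rank] A_ker].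
have [|A00 A11 A02 A12 A22] := ex_vec_qform_kernel A_sym.
  by move=> k ke3; apply: A_ker; rewrite !inE.
rewrite qform_entries !big_ord_recl !big_ord0 !mxE /= A22.
suff a0 : A i0 i1 = 0 by lra.
have sym a b : A a b = A b a by rewrite -{1}A_sym mxE.
have [u u0 uA] := rank_lt_ker (A := A) A_rank.
apply/eqP/negPn/negP => a_ne0; case/eqP: u0.
have ua_eq0 k : u 0 k * A i0 i1 = 0 -> u 0 k = 0.
  by move/eqP; rewrite mulf_eq0 (negPf a_ne0) orbF => /eqP.
(* [u *m A = (a u_1, a u_0, -2 a u_2)] with [a = A i0 i1]. *)
have /rowP uA_col := uA.
have := uA_col i0; have := uA_col i1; have := uA_col i2.
rewrite !mxE !big_ord_recl !big_ord0 [A i1 i0]sym [A i2 i0]sym [A i2 i1]sym.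
rewrite A00 A11 A02 A12 A22 => c2 c1 c0.
apply/rowP => k; rewrite mxE; apply: ua_eq0.
do 3![case: (unliftP ord0 k) => [k' ->|->]; last lra; clear k;
      rename k' into k].
by case: k.
Qed.

End Example.

Theorem lemma1p5 (R : realType) :
  (forall (n N : nat) (f : 'I_N -> 'cV[R]_n),
     is_frame f -> exact_PR_redundancy f ->
     outer_lin_indep f /\ (N <= n * n.+1 %/ 2)%N) /\
  (exists (n N : nat) (f : 'I_N -> 'cV[R]_n),
     is_frame f /\ outer_lin_indep f /\ ~ exact_PR_redundancy f).
Proof.
split.
  move=> n N f _ f_PR; have f_indep := exact_PR_redundancy_outer_lin_indep f_PR.
  split=> //; have := outer_lin_indep_card f_indep.
  by rewrite bin2 -divn2 mulnC.
exists 3%N, 6%N, ex_vec; split; first exact: ex_vec_frame.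
split; first exact: ex_vec_outer_lin_indep.
exact: ex_vec_not_exact_PR_redundancy.
Qed.
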